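(* Let $N:\Sigma\to c(X)$ be a multimeasure satisfying the countable chain condition. Then there is an at most countable family $\{x'_n:n\in\mathbb N\}\subseteq X'$ such that $$\bigcap_n \mathcal N[s(x'_n,N)]=\bigcap_{x'\in X'}\mathcal N[s(x',N)].$$
   Context: $(\Omega,\Sigma)$ is a measurable space and $X$ is a Hausdorff locally convex space with dual $X'$. $c(X)$ is the family of nonempty closed convex subsets of $X$; $s(x',C)=\sup\{\langle x',x\rangle:x\in C\}$. A multimeasure is a map $M:\Sigma\to c(X)$ such that for every $x'\in X'$ the set function $s(x',M(\cdot))$ is a $\sigma$-finite countably additive measure with values in $(-\infty,+\infty]$. $\mathcal N(N)=\{E\in\Sigma:N(E)=\{0\}\}$; $N$ satisfies the countable chain condition if every family of pairwise disjoint sets in $\Sigma\setminus\mathcal N(N)$ is at most countable. For a measure $\nu:\Sigma\to(-\infty,+\infty]$, $\mathcal N[\nu]=\{E\in\Sigma:\nu(F)=0\text{ for all }F\in\Sigma,\ F\subseteq E\}$. *)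

From HB Require Import structures.
From mathcomp Require Import all_boot all_order all_algebra.
From mathcomp Require Import all_classical all_reals all_analysis.
Set Implicit Arguments. Unset Strict Implicit. Unset Printing Implicit Defensive.
Import Order.TTheory GRing.Theory Num.Theory.
Import numFieldTopology.Exports.
Local Open Scope classical_set_scope.
Local Open Scope ring_scope.

(* X is a (real) locally convex space: [tvsType R] in MathComp-Analysis is a
   locally convex topological vector space; Hausdorffness is an extra
   hypothesis [hausdorff_space X] in the theorem. *)

Definition in_dual (R : realType) (X : tvsType R) (f : X -> R) : Prop :=
  (forall (a : R) (x y : X), f (a *: x + y) = a * f x + f y) /\ continuous f.

Definition cX (R : realType) (X : tvsType R) (C : set X) : Prop :=
  C !=set0 /\ closed C /\ convex_set (C : set (convex_lmodType X)).

Definition supp_fun (R : realType) (X : tvsType R) (f : X -> R) (C : set X)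
  : \bar R := ereal_sup [set (f x)%:E | x in C].

Definition sf_ext_measure d (T : measurableType d) (R : realType)
  (nu : set T -> \bar R) : Prop :=
  nu set0 = 0%E /\
  (forall E, measurable E -> (-oo < nu E)%E) /\
  semi_sigma_additive nu /\
  sigma_finite [set: T] nu.

Definition multimeasure d (T : measurableType d) (R : realType) (X : tvsType R)
  (M : set T -> set X) : Prop :=
  (forall E, measurable E -> cX (M E)) /\
  (forall f, in_dual f -> sf_ext_measure (fun E => supp_fun f (M E))).

Definition null_sets d (T : measurableType d) (R : realType) (X : tvsType R)
  (M : set T -> set X) : set (set T) :=
  [set E | measurable E /\ M E = [set 0]].

Definition ccc d (T : measurableType d) (R : realType) (X : tvsType R)
  (M : set T -> set X) : Prop :=
  forall F : set (set T),
    (forall A, F A -> measurable A /\ ~ null_sets M A) ->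
    (forall A B, F A -> F B -> A <> B -> A `&` B = set0) ->
    countable F.

Definition null_meas d (T : measurableType d) (R : realType)
  (nu : set T -> \bar R) : set (set T) :=
  [set E | measurable E /\
           (forall F, measurable F -> F `<=` E -> nu F = 0%E)].

From HB Require Import structures.
From mathcomp Require Import all_boot all_order all_algebra.
From mathcomp Require Import all_classical all_reals all_analysis.
Set Implicit Arguments. Unset Strict Implicit. Unset Printing Implicit Defensive.
Import Order.TTheory GRing.Theory Num.Theory.
Import numFieldTopology.Exports.
Local Open Scope classical_set_scope.
Local Open Scope ring_scope.

(* Write nu_f for the measure E |-> s(f, N(E)).  Call a measurable set
   "charged" when some nu_f does not vanish on it, and "all-null" when it
   lies in N[nu_f] for every f in X'; a set W is "f-adapted" when each of
   its measurable nu_f-null subsets is all-null.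

   1. Exhaustion principle: if all pairwise disjoint subfamilies of a family
      Q of sets are countable, then a sequence of members of Q (or empty
      sets) already meets every nonempty member of Q (Zorn's lemma).  By the
      countable chain condition this applies to families of charged sets.
   2. For each f in X', exhausting the charged nu_f-null sets yields a
      nu_f-null set U_f whose complement is f-adapted.
   3. Exhausting the charged sets that are f-adapted for some f yields
      sets e_n, f_n-adapted for functionals f_n; a measurable set disjoint
      from all e_n that is adapted for some functional is all-null.
   4. If E is nu_{f_n}-null for all n and g is in X', then E is covered by
      E ∩ U_g (nu_g-null), E ∩ ⋃ e_n (all-null by adaptedness) and
      E \ (U_g ∪ ⋃ e_n) (all-null by 3), hence E is nu_g-null. *)

(* Zorn's lemma gives a maximal pairwise disjoint subfamily G of Q: every
   nonempty member of Q meets a member of G. *)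
Lemma maximal_disjoint_subfamily (T : Type) (Q : set (set T)) :
  exists G : set (set T), G `<=` Q /\
    (forall A B, G A -> G B -> A <> B -> A `&` B = set0) /\
    (forall C, Q C -> C !=set0 -> exists2 B, G B & C `&` B !=set0).
Proof.
pose P := [set G : set (set T) | G `<=` Q /\
    (forall A B, G A -> G B -> A <> B -> A `&` B = set0)].
have chainP F : F `<=` P -> total_on F subset -> P (\bigcup_(G in F) G).
  move=> FP Ftot; split => [A [G /FP[GQ _] /GQ]//|A B [G1 F1 A1] [G2 F2 B2]].
  have [/(_ _ A1) A2|/(_ _ B2) B1] := Ftot _ _ F1 F2.
  - exact: (FP _ F2).2.
  - exact: (FP _ F1).2.
have [G [[GQ Gdisj] Gmax]] := Zorn_bigcup chainP.
exists G; split => //; split => // C QC C0.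
apply: contrapT => Cfree.
have GC : ~ G C by move=> GC; apply: Cfree; exists C; rewrite ?setIid.
have meets_C A : G A -> A `&` C = set0.
  move=> GA; apply: contrapT => /eqP/set0P AC.
  by apply: Cfree; exists A; rewrite // setIC.
apply: (Gmax (G `|` [set C])).
  by split => [x Gx|h]; [left|apply: GC; apply: h; right].
split => [A [/GQ//|->//]|A B [GA|->] [GB|->] AB].
- exact: Gdisj.
- exact: meets_C.
- by rewrite setIC; apply: meets_C.
- by [].
Qed.

Lemma countable_enum (T : Type) (G : set (set T)) : countable G ->
  exists e : nat -> set T,
    (forall n, G (e n) \/ e n = set0) /\ (forall B, G B -> exists n, e n = B).
Proof.
case/pfcard_geP => [->|[e]]; first by exists (fun=> set0); split => // n; right.
exists e; split => [n|B /(@surj _ _ _ _ e)[n _ <-]]; last by exists n.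
by left; apply: (@funS _ _ _ _ e).
Qed.

Lemma countable_exhaustion (T : Type) (Q : set (set T)) :
  (forall G, G `<=` Q ->
     (forall A B, G A -> G B -> A <> B -> A `&` B = set0) -> countable G) ->
  exists e : nat -> set T, (forall n, Q (e n) \/ e n = set0) /\
    (forall C, Q C -> C `&` \bigcup_n e n = set0 -> C = set0).
Proof.
move=> Qccc; have [G [GQ [Gdisj Gmax]]] := maximal_disjoint_subfamily Q.
have [e [eG Ge]] := countable_enum (Qccc G GQ Gdisj).
exists e; split => [n|C QC CU]; first by case: (eG n) => [/GQ|]; [left|right].
apply: contrapT => /eqP/set0P/(Gmax C QC)[B /Ge[n <-] [x [Cx ex]]].
have : (C `&` \bigcup_n e n) x by split => //; exists n.
by rewrite CU.
Qed.

Section null_meas_ideal.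
Context d (T : measurableType d) (R : realType) (nu : set T -> \bar R).
Hypothesis nu0 : nu set0 = 0%E.
Hypothesis nu_sigma : semi_sigma_additive nu.

Lemma null_meas_set0 : null_meas nu set0.
Proof. by split => // F _; rewrite subset0 => ->. Qed.

Lemma null_meas_sub E F :
  null_meas nu E -> measurable F -> F `<=` E -> null_meas nu F.
Proof.
move=> [mE Enull] mF FE; split => // G mG GF.
by apply: Enull => //; apply: subset_trans FE.
Qed.

(* A countable union of null sets is null: a measurable subset of it is the
   disjoint union of pieces lying in single null sets. *)
Lemma null_meas_bigcup (E : nat -> set T) :
  (forall n, null_meas nu (E n)) -> null_meas nu (\bigcup_n E n).
Proof.
move=> Enull; split; first by apply: bigcupT_measurable => n; case: (Enull n).
move=> F mF FE; pose D := seqDU (fun n => F `&` E n).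
have mD n : measurable (D n).
  by apply: seqDU_measurable => k; apply: measurableI => //; case: (Enull k).
have UD : \bigcup_n D n = F by rewrite -seqDU_bigcup_eq -setI_bigcupr; apply/setIidPl.
have D0 n : nu (D n) = 0%E.
  by apply: (Enull n).2 => // x Dx; have [] := subset_seqDU Dx.
have := nu_sigma mD (trivIset_seqDU _); rewrite UD => /(_ mF).
under eq_fun do rewrite big1 //.
by move/cvg_lim => <- //; apply: lim_cst.
Qed.

Lemma null_meas_setU A B :
  null_meas nu A -> null_meas nu B -> null_meas nu (A `|` B).
Proof.
move=> Anull Bnull; rewrite -bigcup2E; apply: null_meas_bigcup => -[|[|n]] //=.
exact: null_meas_set0.
Qed.

End null_meas_ideal.

Lemma in_dual0 (R : realType) (X : tvsType R) : in_dual (fun _ : X => (0:R)).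
Proof.
split; first by move=> *; rewrite mulr0 addr0.
exact: cst_continuous.
Qed.

Lemma supp_fun_set0 (R : realType) (X : tvsType R) (f : X -> R) :
  in_dual f -> supp_fun f [set 0] = 0%E.
Proof.
move=> [flin _]; rewrite /supp_fun image_set1 ereal_sup1.
have := flin 1 0 0; rewrite scale1r addr0 mul1r => f00.
by congr (_%:E); apply: (addrI (f 0)); rewrite addr0 -f00.
Qed.

Section multimeasure_null_sets.
Context d (T : measurableType d) (R : realType) (X : tvsType R).
Variable N : set T -> set X.
Hypothesis N_mm : multimeasure N.
Hypothesis N_ccc : ccc N.

Definition nu (f : X -> R) (E : set T) : \bar R := supp_fun f (N E).

Definition all_null (E : set T) : Prop :=
  forall f, in_dual f -> null_meas (nu f) E.

Definition charged (B : set T) : Prop :=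
  measurable B /\ exists2 f, in_dual f & nu f B <> 0%E.

Definition adapted (f : X -> R) (W : set T) : Prop :=
  forall H, measurable H -> H `<=` W -> null_meas (nu f) H -> all_null H.

Lemma nu_set0 f : in_dual f -> nu f set0 = 0%E.
Proof. by move=> /N_mm.2[]. Qed.

Lemma nu_sigma_additive f : in_dual f -> semi_sigma_additive (nu f).
Proof. by move=> /N_mm.2 [_ [_ []]]. Qed.

Lemma charged_neq0 B : charged B -> B !=set0.
Proof.
by move=> [_ [f fX nfB]]; apply/set0P/eqP => B0; apply: nfB; rewrite B0 nu_set0.
Qed.

(* The countable chain condition, phrased for charged sets: a charged set
   is not in N(N) since s(f, {0}) = 0. *)
Lemma charged_ccc G : G `<=` charged ->
  (forall A B, G A -> G B -> A <> B -> A `&` B = set0) -> countable G.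
Proof.
move=> Gch; apply: N_ccc => A /Gch[mA [f fX nfA]]; split => // -[_ NA].
by apply: nfA; rewrite /nu NA supp_fun_set0.
Qed.

Lemma all_nullP K : measurable K ->
  (forall F, F `<=` K -> charged F -> F = set0) -> all_null K.
Proof.
move=> mK noch f fX; split => // F mF FK; apply: contrapT => nfF.
have chF : charged F by split => //; exists f.
by have [x] := charged_neq0 chF; rewrite (noch F FK chF).
Qed.

Lemma adapted_sub f V W : adapted f W -> V `<=` W -> adapted f V.
Proof. by move=> Wad VW H mH HV; apply: Wad => //; apply: subset_trans VW. Qed.

(* For each f in X' there is a nu_f-null set U whose complement is
   f-adapted: U exhausts the charged nu_f-null sets. *)
Lemma null_core f : in_dual f ->
  exists2 U, null_meas (nu f) U & adapted f (~` U).
Proof.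
move=> fX; pose Q := charged `&` null_meas (nu f).
have [e [eQ eQmax]] := countable_exhaustion (Q := Q) (fun G GQ =>
  charged_ccc (fun B QB => (GQ B QB).1)).
have enull n : null_meas (nu f) (e n).
  by case: (eQ n) => [[]//|->]; apply: null_meas_set0; apply: nu_set0.
exists (\bigcup_n e n); first exact: (null_meas_bigcup (nu_sigma_additive fX) enull).
move=> H mH HU Hnull; apply: all_nullP => // F FH chF.
apply: eQmax; first by split => //; apply: null_meas_sub Hnull chF.1 FH.
by apply/disjoints_subset; apply: subset_trans HU.
Qed.

(* Exhausting the charged sets that are adapted to some functional. *)
Lemma adapted_exhaustion : exists (x' : nat -> X -> R) (e : nat -> set T),
  [/\ forall n, in_dual (x' n),
      forall n, measurable (e n) /\ adapted (x' n) (e n) &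
      forall K, measurable K -> K `&` \bigcup_n e n = set0 ->
        forall g, in_dual g -> adapted g K -> all_null K].
Proof.
pose Q := [set W | charged W /\ exists2 f, in_dual f & adapted f W].
have [e [eQ eQmax]] := countable_exhaustion (Q := Q) (fun G GQ =>
  charged_ccc (fun B QB => (GQ B QB).1)).
have /choice[x' x'e] : forall n, exists f : X -> R,
    in_dual f /\ measurable (e n) /\ adapted f (e n).
  move=> n; case: (eQ n) => [[[me _] [f fX fad]]|->].
    by exists f.
  exists (fun=> 0); split; first exact: in_dual0.
  by split => // H _; rewrite subset0 => -> _ f fX; apply: null_meas_set0; apply: nu_set0.
exists x', e; split => [n|n|K mK Ke g gX Kad]; try by case: (x'e n).
apply: all_nullP => // F FK chF; apply: eQmax.
  by split => //; exists g => //; apply: adapted_sub Kad FK.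
by apply/disjoints_subset; apply: subset_trans FK _; apply/disjoints_subset.
Qed.

Lemma covered_all_null (x' : nat -> X -> R) (e : nat -> set T) E :
  (forall n, in_dual (x' n)) ->
  (forall n, measurable (e n) /\ adapted (x' n) (e n)) ->
  (forall n, null_meas (nu (x' n)) E) -> all_null (E `&` \bigcup_n e n).
Proof.
move=> x'X ead Enull g gX; rewrite setI_bigcupr.
apply: (null_meas_bigcup (nu_sigma_additive gX)) => n.
have [me ad] := ead n; have mEe : measurable (E `&` e n).
  by apply: measurableI => //; case: (Enull 0%N).
have Ee_null : null_meas (nu (x' n)) (E `&` e n).
  exact: (null_meas_sub (Enull n) mEe (@subIsetl _ _ _)).
exact: (ad _ mEe (@subIsetr _ _ _) Ee_null g gX).
Qed.

End multimeasure_null_sets.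

Theorem lemma3p3 (d : measure_display) (T : measurableType d) (R : realType)
  (X : tvsType R) (HX : hausdorff_space X) (N : set T -> set X) :
  multimeasure N -> ccc N ->
  exists x' : nat -> (X -> R),
    (forall n, in_dual (x' n)) /\
    \bigcap_n null_meas (fun E => supp_fun (x' n) (N E)) =
    \bigcap_(f in in_dual (X:=X)) null_meas (fun E => supp_fun f (N E)).
Proof.
move=> N_mm N_ccc.
have [x' [e [x'X ead eall]]] := adapted_exhaustion N_mm N_ccc.
exists x'; split => //; apply/seteqP; split => [E Enull g gX|E Enull n _].
  2: exact: Enull.
have mE : measurable E by case: (Enull 0%N I).
have [U Unull Uad] := null_core N_mm N_ccc gX.
have mU : measurable U := Unull.1.
have mUe : measurable (\bigcup_n e n).
  by apply: bigcupT_measurable => n; case: (ead n).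
(* E is covered by a nu_g-null piece and two all-null pieces. *)
have core_null : null_meas (nu N g) (E `&` U).
  exact: null_meas_sub Unull (measurableI _ _ mE mU) (@subIsetr _ _ _).
have covered_null := covered_all_null N_mm x'X ead (fun n => Enull n I) gX.
pose rest := E `\` U `\` \bigcup_n e n.
have rest_null : all_null N rest.
  apply: (eall _ (measurableD (measurableD mE mU) mUe) _ g gX).
    by apply/disjoints_subset => x [].
  by apply: adapted_sub Uad _ => x [[]].
have sg := nu_sigma_additive N_mm gX; have s0 := nu_set0 N_mm gX.
apply: null_meas_sub (null_meas_setU s0 sg
  (null_meas_setU s0 sg core_null covered_null) (rest_null g gX)) mE _.
move=> x Ex; have [xU|xU] := pselect (U x); first by do 2 left.
have [xe|xe] := pselect ((\bigcup_n e n) x); first by left; right.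
by right; split; first split.
Qed.
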